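(* Let $U\subseteq S$ be measurable, $\gamma\in(0,1)$, $r(s,a,s')=\mathbf 1_{\{s\in U\}}$, and $\pi$ a stationary policy. Let $I\subseteq S$ be a measurable set that is absorbing under $\pi$, and assume $\Pr_\pi(\tau_U<\infty\mid S_0=s)=1$ for all $s\in I\setminus U$. Then for all $s\in I\setminus U$, $$\mathbb{E}_\pi[V^\pi(S_1)\mid S_0=s]-V^\pi(s)>0.$$
   Context: $(S,\mathit{Act},P,\mu)$ is an MDP with state/action spaces finite/countable or Borel subsets of Euclidean space. A stationary policy $\pi$ is a stochastic kernel on $\mathit{Act}$ given $S$; $\Pr_\pi(\cdot\mid S_0=s)$, $\mathbb{E}_\pi[\cdot\mid S_0=s]$ refer to the process with $S_0=s$, $A_t\sim\pi(\cdot\mid S_t)$, $S_{t+1}\sim P(\cdot\mid S_t,A_t)$. Value function: $V^\pi(s)=\mathbb{E}_\pi[\sum_{t\ge0}\gamma^t r(S_t,A_t,S_{t+1})\mid S_0=s]$. A measurable set $X$ is absorbing under $\pi$ if $\Pr_\pi(S_1\in X\mid S_0=s)=1$ for all $s\in X$. $\tau_U:=\inf\{t\ge0:S_t\in U\}$, $\inf\emptyset=\infty$. *)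

From HB Require Import structures.
From mathcomp Require Import all_boot all_order all_algebra.
From mathcomp Require Import all_classical all_reals all_analysis.
Set Implicit Arguments. Unset Strict Implicit. Unset Printing Implicit Defensive.
Import Order.TTheory GRing.Theory Num.Theory.
Local Open Scope classical_set_scope.
Local Open Scope ring_scope.

(* The law of the
   process started at S_0 = s is determined by its finite-dimensional
   distributions; we express every quantity of the paper through them
   (one-step operator = conditional expectation given S_0 = s). *)
Section MDP.
Context (R : realType) (dS dA : measure_display)
  (S : measurableType dS) (A : measurableType dA).
Variables (P : R.-pker (S * A)%type ~> S) (pi : R.-pker S ~> A).
Local Open Scope ereal_scope.

(* E_pi[ f(S_1) | S_0 = s ] *)
Definition exp_next (f : S -> \bar R) (s : S) : \bar R :=
  \int[pi s]_a \int[P (s, a)]_s' f s'.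

(* E_pi[ f(S_n) | S_0 = s ] (Markov property: n-fold iterate). *)
Fixpoint exp_at (n : nat) (f : S -> \bar R) : S -> \bar R :=
  match n with
  | O => f
  | n'.+1 => exp_next (exp_at n' f)
  end.

Definition exp_reward (r : S -> A -> S -> R) (s : S) : \bar R :=
  \int[pi s]_a \int[P (s, a)]_s' (r s a s')%:E.

Definition value (gamma : R) (r : S -> A -> S -> R) (s : S) : \bar R :=
  \sum_(0 <= t <oo) ((gamma ^+ t)%:E * exp_at t (exp_reward r) s).

Definition absorbing (X : set S) : Prop :=
  forall s, X s -> exp_next (fun y => (\1_X y)%:E) s = 1.

(* Pr_pi(S_0 \notin U, ..., S_n \notin U | S_0 = s) *)
Fixpoint avoid_prob (U : set S) (n : nat) : S -> \bar R :=
  match n with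
  | O => fun s => (\1_(~` U) s)%:E
  | n'.+1 => fun s => (\1_(~` U) s)%:E * exp_next (avoid_prob U n') s
  end.

(* Pr_pi(tau_U <= n | S_0 = s) *)
Definition hit_by (U : set S) (n : nat) (s : S) : \bar R :=
  1 - avoid_prob U n s.

(* Pr_pi(tau_U < oo | S_0 = s) = sup_n Pr_pi(tau_U <= n | S_0 = s)
   (continuity from below of the path measure). *)
Definition hit_prob (U : set S) (s : S) : \bar R :=
  ereal_sup (range (fun n => hit_by U n s)).

End MDP.

From HB Require Import structures.
From mathcomp Require Import all_boot all_order all_algebra.
From mathcomp Require Import all_classical all_reals all_analysis.
From mathcomp Require Import measurable_realfun.
Set Implicit Arguments.
Unset Strict Implicit.
Unset Printing Implicit Defensive.
Import Order.TTheory GRing.Theory Num.Theory.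
Local Open Scope classical_set_scope.
Local Open Scope ring_scope.

(** Outside [U] the Bellman equation [V s = 1_U(s) + gamma E[V(S_1)]] reads
    [V s = gamma E[V(S_1)]], so the difference is [(1 - gamma) E[V(S_1)]],
    finite since [V <= 1/(1 - gamma)].  It is positive since [V s] is: by the
    union bound [Pr(tau_U <= n) <= sum_(t <= n) Pr(S_t \in U)], an a.s. finite
    hitting time forces [Pr(S_t \in U) > 0] for some [t]. *)

Lemma nneseries_geometric (R : realType) (gamma : R) : 0 <= gamma < 1 ->
  (\sum_(0 <= t <oo) (gamma ^+ t)%:E = ((1 - gamma)^-1)%:E)%E.
Proof.
move=> /andP[g0 g1].
have /(@cvg_geometric_series R 1) : `|gamma| < 1 by rewrite ger0_norm.
rewrite mul1r => cvg_series; apply: cvg_lim => //.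
rewrite (_ : (fun n => _) = EFin \o series (geometric 1 gamma)).
  exact: cvg_comp cvg_series _.
apply/funext => n /=; rewrite sumEFin /series /=; congr EFin.
by apply: eq_bigr => t _; rewrite /geometric /= mul1r.
Qed.

Lemma sube_scale_gt0 (R : realType) (c : R) (x : \bar R) :
  c < 1 -> (0 < x)%E -> x \is a fin_num -> (0 < x - c%:E * x)%E.
Proof.
move=> c1 + /fineK xE; rewrite -xE -EFinM -EFinB !lte_fin => x0.
by rewrite -[X in (X - _)%R]mul1r -mulrBl mulr_gt0 // subr_gt0.
Qed.

Section one_step_expectation.
Context (R : realType) (dS dA : measure_display)
  (S : measurableType dS) (A : measurableType dA)
  (P : R.-pker (S * A)%type ~> S) (pi : R.-pker S ~> A).
Local Open Scope ereal_scope.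

Definition nonneg_measurable (f : S -> \bar R) :=
  (forall x, 0 <= f x) /\ measurable_fun setT f.

Lemma nonneg_measurable_indic (V : set S) : measurable V ->
  nonneg_measurable (fun y => (\1_V y)%:E).
Proof.
move=> mV; split => [y|]; first by rewrite lee_fin.
exact/measurable_EFinP/measurable_indic.
Qed.

Lemma nonneg_measurable_sum (I : Type) (r : seq I) (f : I -> S -> \bar R) :
  (forall i, nonneg_measurable (f i)) ->
  nonneg_measurable (fun x => \sum_(i <- r) f i x).
Proof.
move=> hf; split => [x|]; first by apply: sume_ge0 => i _; case: (hf i).
by apply: emeasurable_sum => i; case: (hf i).
Qed.

Lemma exp_nextE f : nonneg_measurable f ->
  exp_next P pi f = fun s => \int[mkcomp pi P s]_y f y.
Proof. by move=> [f0 mf]; apply/funext => s; rewrite integral_kcomp. Qed.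

Lemma exp_next_cst c s : exp_next P pi (fun=> c) s = c.
Proof.
by rewrite /exp_next (eq_integral (cst c)) => [|a _];
  rewrite integral_cst // prob_kernel mule1.
Qed.

Lemma nonneg_measurable_exp_next f : nonneg_measurable f ->
  nonneg_measurable (exp_next P pi f).
Proof.
move=> hf; rewrite exp_nextE //; case: hf => f0 mf; split => [s|].
  exact: integral_ge0.
by apply: measurable_fun_integral_kernel => // V mV; exact: measurable_kernel.
Qed.

Lemma le_exp_next f g s : nonneg_measurable f -> nonneg_measurable g ->
  (forall x, f x <= g x) -> exp_next P pi f s <= exp_next P pi g s.
Proof.
by move=> [f0 mf] [g0 mg] fg; rewrite !exp_nextE //; apply: ge0_le_integral.
Qed.

Lemma exp_nextD f g s : nonneg_measurable f -> nonneg_measurable g ->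
  exp_next P pi (fun x => f x + g x) s = exp_next P pi f s + exp_next P pi g s.
Proof.
move=> [f0 mf] [g0 mg]; have hfg : nonneg_measurable (fun x => f x + g x).
  by split; [move=> x; exact: adde_ge0 | exact: emeasurable_funD].
by rewrite !exp_nextE //; apply: ge0_integralD.
Qed.

Lemma exp_next_sum (I : Type) (r : seq I) (f : I -> S -> \bar R) s :
  (forall i, nonneg_measurable (f i)) ->
  exp_next P pi (fun x => \sum_(i <- r) f i x) s =
  \sum_(i <- r) exp_next P pi (f i) s.
Proof.
move=> hf; rewrite exp_nextE; last exact: nonneg_measurable_sum.
rewrite ge0_integral_sum //; last by move=> i x _; case: (hf i).
  by apply: eq_bigr => i _; rewrite exp_nextE.
by move=> i; case: (hf i).
Qed.

Lemma exp_nextZl (c : R) f s : (0 <= c)%R -> nonneg_measurable f ->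
  exp_next P pi (fun x => c%:E * f x) s = c%:E * exp_next P pi f s.
Proof.
move=> c0 [f0 mf]; have hcf : nonneg_measurable (fun x => c%:E * f x).
  by split; [move=> x; exact: mule_ge0 | exact: measurable_funeM].
by rewrite !exp_nextE //; apply: ge0_integralZl_EFin.
Qed.

Lemma exp_next_nneseries (f : nat -> S -> \bar R) s :
  (forall t, nonneg_measurable (f t)) ->
  exp_next P pi (fun x => \sum_(0 <= t <oo) f t x) s =
  \sum_(0 <= t <oo) exp_next P pi (f t) s.
Proof.
move=> hf; have hF : nonneg_measurable (fun x => \sum_(0 <= t <oo) f t x).
  split => [x|]; first by apply: nneseries_ge0 => t _ _; case: (hf t).
  by apply: ge0_emeasurable_sum => [t x _ _|t _]; case: (hf t).
rewrite exp_nextE // integral_nneseries //; last by move=> t x _; case: (hf t).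
  by apply: eq_eseriesr => t _; rewrite exp_nextE.
by move=> t; case: (hf t).
Qed.

End one_step_expectation.

Section visits.
Context (R : realType) (dS dA : measure_display)
  (S : measurableType dS) (A : measurableType dA)
  (P : R.-pker (S * A)%type ~> S) (pi : R.-pker S ~> A).
Variables (U : set S) (mU : measurable U).
Local Open Scope ereal_scope.

Definition visit_prob (t : nat) : S -> \bar R :=
  exp_at P pi t (fun y => (\1_U y)%:E).

Lemma nonneg_measurable_visit_prob t : nonneg_measurable (visit_prob t).
Proof.
elim: t => [|t IHt]; first exact: nonneg_measurable_indic.
exact: nonneg_measurable_exp_next.
Qed.

Lemma visit_prob_le1 t s : visit_prob t s <= 1.
Proof.
elim: t s => [|t IHt] s; first by rewrite /= lee_fin indicE; case: (s \in U).
rewrite -(exp_next_cst P pi 1 s); apply: le_exp_next => //.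
exact: nonneg_measurable_visit_prob.
Qed.

Lemma nonneg_measurable_avoid_prob n : nonneg_measurable (avoid_prob P pi U n).
Proof.
have mUc := nonneg_measurable_indic R (measurableC mU).
elim: n => [//|n [avoid0 mavoid]] /=.
have [next0 mnext] := nonneg_measurable_exp_next P pi (conj avoid0 mavoid).
case: mUc => Uc0 mUc; split => [s|]; first exact: mule_ge0.
exact: emeasurable_funM.
Qed.

Lemma avoid_prob_add_visits_ge1 n s :
  1 <= avoid_prob P pi U n s + \sum_(0 <= t < n.+1) visit_prob t s.
Proof.
elim: n s => [|n IHn] s.
  rewrite big_nat1 /visit_prob /= !indicE in_setC.
  by case: (s \in U); rewrite /= -EFinD lee_fin ?add0r ?addr0.
have visits_next : \sum_(0 <= t < n.+1) visit_prob t.+1 s =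
    exp_next P pi (fun y => \sum_(0 <= t < n.+1) visit_prob t y) s.
  by rewrite exp_next_sum //; exact: nonneg_measurable_visit_prob.
have visit0 : visit_prob 0 s = (\1_U s)%:E by [].
rewrite big_nat_recl //= visits_next visit0 !indicE in_setC.
have visits_nm :=
  nonneg_measurable_sum (index_iota 0 n.+1) nonneg_measurable_visit_prob.
case: (s \in U) => /=.
  rewrite mul0e add0e leeDl //.
  exact: (nonneg_measurable_exp_next P pi visits_nm).1.
rewrite mul1e add0e -exp_nextD //; last exact: nonneg_measurable_avoid_prob.
rewrite -(exp_next_cst P pi 1 s); apply: le_exp_next => //.
have [avoid0 mavoid] := nonneg_measurable_avoid_prob n.
case: visits_nm => visits0 mvisits.
by split => [y|]; [exact: adde_ge0 | exact: emeasurable_funD].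
Qed.

Lemma hit_prob_gt0_visit s : 0 < hit_prob P pi U s ->
  exists t, 0 < visit_prob t s.
Proof.
apply: contraPP => /forallNP no_visit; apply/negP; rewrite -leNgt.
have visit0 t : visit_prob t s = 0.
  apply/eqP; rewrite eq_le leNgt; apply/andP; split; first exact/negP.
  by case: (nonneg_measurable_visit_prob t).
apply: ge_ereal_sup => _ [n _ <-]; rewrite /hit_by sube_le0.
have := avoid_prob_add_visits_ge1 n s.
by rewrite big1 ?adde0 // => t _; exact: visit0.
Qed.

Section value.
Variables (gamma : R) (gamma_ge0 : (0 <= gamma)%R).
Local Notation V := (value P pi gamma (fun s _ _ => \1_U s)).

Lemma valueE : V = fun s => \sum_(0 <= t <oo) (gamma ^+ t)%:E * visit_prob t s.
Proof.
apply/funext => s; apply: eq_eseriesr => t _; congr (_ * exp_at _ _ t _ s).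
by apply/funext => y; exact: exp_next_cst.
Qed.

Lemma discounted_visit_ge0 t s : 0 <= (gamma ^+ t)%:E * visit_prob t s.
Proof.
apply: mule_ge0; first by rewrite lee_fin exprn_ge0.
exact: (nonneg_measurable_visit_prob t).1.
Qed.

Lemma nonneg_measurable_discounted_visit t :
  nonneg_measurable (fun s => (gamma ^+ t)%:E * visit_prob t s).
Proof.
split => [s|]; first exact: discounted_visit_ge0.
by apply: measurable_funeM; case: (nonneg_measurable_visit_prob t).
Qed.

Lemma nonneg_measurable_value : nonneg_measurable V.
Proof.
rewrite valueE; split => [s|].
  by apply: nneseries_ge0 => t _ _; exact: discounted_visit_ge0.
apply: ge0_emeasurable_sum => [t s _ _|t _]; first exact: discounted_visit_ge0.
by case: (nonneg_measurable_discounted_visit t).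
Qed.

Lemma value_bellman s : V s = (\1_U s)%:E + gamma%:E * exp_next P pi V s.
Proof.
rewrite valueE exp_next_nneseries => [|t]; last first.
  exact: nonneg_measurable_discounted_visit.
rewrite [LHS]nneseries_recl // => [|t _]; last exact: discounted_visit_ge0.
rewrite expr0 mul1e; congr (_ + _).
rewrite -nneseries_addn; last by move=> t; exact: discounted_visit_ge0.
rewrite -nneseriesZl => [|t _]; last first.
  have := nonneg_measurable_discounted_visit t.
  by move/(nonneg_measurable_exp_next P pi) => [].
apply: eq_eseriesr => t _; rewrite exp_nextZl ?exprn_ge0 //.
  by rewrite addn1 exprS EFinM muleA.
exact: nonneg_measurable_visit_prob.
Qed.

Lemma value_le (gamma_lt1 : (gamma < 1)%R) s : V s <= ((1 - gamma)^-1)%:E.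
Proof.
rewrite valueE -nneseries_geometric ?gamma_ge0 //.
apply: lee_nneseries => [t _ _|t _]; first exact: discounted_visit_ge0.
by rewrite -[leRHS]mule1 lee_wpmul2l ?lee_fin ?exprn_ge0 ?visit_prob_le1.
Qed.

Lemma value_gt0 (gamma_gt0 : (0 < gamma)%R) t s :
  0 < visit_prob t s -> 0 < V s.
Proof.
move=> visit_gt0; have term_gt0 : 0 < (gamma ^+ t)%:E * visit_prob t s.
  by rewrite mule_gt0 // lte_fin exprn_gt0.
rewrite valueE; apply: lt_le_trans (nneseries_lim_ge t.+1 _) => [|i _ _].
  rewrite big_nat_recr //=; apply: (lt_le_trans term_gt0); rewrite leeDr //.
  by apply: sume_ge0 => i _; exact: discounted_visit_ge0.
exact: discounted_visit_ge0.
Qed.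

End value.

End visits.

Theorem lemma3 (R : realType) (dS dA : measure_display)
  (S : measurableType dS) (A : measurableType dA)
  (P : R.-pker (S * A)%type ~> S) (pi : R.-pker S ~> A)
  (U : set S) (mU : measurable U) (gamma : R) (hgamma : 0 < gamma < 1)
  (I : set S) (mI : measurable I)
  (habs : absorbing P pi I)
  (hhit : forall s, (I `\` U) s -> hit_prob P pi U s = 1%E) :
  forall s, (I `\` U) s ->
    (0 < exp_next P pi (value P pi gamma (fun s _ _ => \1_U s)) s
         - value P pi gamma (fun s _ _ => \1_U s) s)%E.
Proof.
move=> s hs; have [_ s_notin_U] := hs.
have [gamma_gt0 gamma_lt1] := andP hgamma; have gamma_ge0 := ltW gamma_gt0.
have := value_bellman P pi mU gamma_ge0 s.
rewrite indicE (memNset s_notin_U) add0e; set X := exp_next _ _ _ s => bellman.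
have [t visit_gt0] : exists t, (0 < visit_prob P pi U t s)%E.
  by apply: hit_prob_gt0_visit => //; rewrite hhit.
have X_gt0 : (0 < X)%E.
  rewrite -(@pmule_rgt0 _ gamma%:E) ?lte_fin // -bellman.
  exact: (value_gt0 mU gamma_ge0 gamma_gt0 visit_gt0).
have X_fin : X \is a fin_num.
  rewrite ge0_fin_numE ?ltW // (le_lt_trans _ (ltry ((1 - gamma)^-1))) //.
  rewrite /X -(exp_next_cst P pi ((1 - gamma)^-1)%:E s).
  apply: le_exp_next => [||y]; first exact: nonneg_measurable_value.
    by split => // y; rewrite lee_fin invr_ge0 subr_ge0 ltW.
  exact: value_le.
by move: (sube_scale_gt0 gamma_lt1 X_gt0 X_fin); rewrite -bellman.
Qed.
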